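(* For every sequence ${\mathbf s}=(s_1,\dots,s_l)$ in $\widehat{\mathcal S}$ with $l\ge1$ the sum defining ${\mathcal X}_T({\mathbf s})$ is direct: ${\mathcal X}_T({\mathbf s})=\Delta({\mathcal X}_T({\mathbf s}'))\oplus c^{\alpha_l}\big(\Delta({\mathcal X}_T({\mathbf s}'))\big)$. In particular, for every sequence ${\mathbf s}$ of length $l$, ${\mathcal X}_T({\mathbf s})$ is a graded free $S_T$-module of graded rank $(1+v^2)^l$ (i.e. it has a homogeneous basis with $\binom lk$ elements of degree $2k$ for each $k$).
   Context: $R$ is an irreducible reduced finite root system with positive roots $R^+$, simple roots $\Pi$, highest root $\gamma$; $X$ its weight lattice, $\widehat X=X\oplus\mathbb Z$, $\delta=(0,-1)$, affine roots $\widehat R=\{\alpha+n\delta\}$. $\widehat{\mathcal W}$ is the affine Weyl group generated by $s_{\alpha,n}(v,m)=(v-(\langle\alpha,v\rangle-mn)\alpha^\vee,m)$ on $V^*\oplus\mathbb Q$, acting contragrediently on $\widehat X$; $\widehat{\mathcal S}=\{s_{\alpha,0}:\alpha\in\Pi\}\cup\{s_{\gamma,1}\}$; the simple affine root attached to $s_{\alpha,0}$ is $\alpha$ and to $s_{\gamma,1}$ is $-\gamma+\delta$. $T$ is a commutative unital domain in which $2$ is not a zero divisor and in which all $\alpha\otimes1\in\widehat X\otimes T$, $\alpha\in\widehat R$, are nonzero. $S_T$ is the symmetric algebra of $\widehat X\otimes T$, graded with $\widehat X\otimes T$ in degree $2$. For ${\mathbf s}=(s_1,\dots,s_l)$, $I({\mathbf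 s})$ is the set of tuples $(i_1<\dots<i_n)$, $0\le n\le l$, in $\{1,\dots,l\}$, and $\operatorname{ev}(i_1,\dots,i_n)=s_{i_1}\cdots s_{i_n}$. For $l\ge1$ let ${\mathbf s}'=(s_1,\dots,s_{l-1})$; regard $I({\mathbf s}')\subset I({\mathbf s})$ and write $\gamma s_l$ for $\gamma$ with $l$ appended, so $I({\mathbf s})=I({\mathbf s}')\sqcup I({\mathbf s}')s_l$. $\Delta\colon\bigoplus_{I({\mathbf s}')}S_T\to\bigoplus_{I({\mathbf s})}S_T$ is given by $\Delta(z)_\gamma=\Delta(z)_{\gamma s_l}=z_\gamma$. For $\lambda\in\widehat X$, $c^\lambda$ is the endomorphism of $\bigoplus_{\sigma\in I({\mathbf s})}S_T$ multiplying the $\sigma$-component by $\operatorname{ev}(\sigma)(\lambda)\otimes1$. $\alpha_l$ is the simple affine root of $s_l$. Define ${\mathcal X}_T(\emptyset)=S_T$ and ${\mathcal X}_T({\mathbf s})=\Delta({\mathcal X}_T({\mathbf s}'))+c^{\alpha_l}(\Delta({\mathcal X}_T({\mathbf s}')))\subset\bigoplus_{\sigma\in I({\mathbf s})}S_T$. *)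

From HB Require Import structures.
From mathcomp Require Import all_boot all_order all_algebra.
From mathcomp Require Import mpoly.
Set Implicit Arguments. Unset Strict Implicit. Unset Printing Implicit Defensive.
Import Order.TTheory GRing.Theory Num.Theory.
Local Open Scope ring_scope.

(* pairing V x V^* -> Q, V^* identified with row vectors via the dot product *)
Definition pair n (x y : 'rV[rat]_n) : rat := \sum_i x 0 i * y 0 i.

Definition refl n (a av x : 'rV[rat]_n) : 'rV[rat]_n := x - pair x av *: a.

(* the matrix whose rows are the vectors of s (its row space = span of s) *)
Definition rows_mx n (s : seq 'rV[rat]_n) : 'M[rat]_(size s, n) :=
  \matrix_(i < size s) nth 0 s i.

Definition is_root_system n (R : seq 'rV[rat]_n) (cor : 'rV[rat]_n -> 'rV[rat]_n)
  : Prop :=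
  [/\ 0 \notin R,
      row_full (rows_mx R),
      (forall a, a \in R -> pair a (cor a) = 2),
      (forall a b, a \in R -> b \in R -> refl a (cor a) b \in R)
    & (forall a b, a \in R -> b \in R -> denq (pair b (cor a)) = 1)].

Definition reduced n (R : seq 'rV[rat]_n) : Prop :=
  forall (a : 'rV[rat]_n) (c : rat), a \in R -> c *: a \in R -> c = 1 \/ c = -1.

(* irreducible: R nonempty and not a direct sum R = R1 u R2 of two nonempty
   root systems with V = span R1 (+) span R2 *)
Definition irreducible n (R : seq 'rV[rat]_n) : Prop :=
  R <> [::] /\
  forall P : pred 'rV[rat]_n,
    has P R -> has (predC P) R ->
    (rows_mx (filter P R) :&: rows_mx (filter (predC P) R) != 0)%MS.

Definition is_base n (R : seq 'rV[rat]_n) (simple : 'I_n -> 'rV[rat]_n) : Prop :=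
  [/\ forall i, simple i \in R,
      row_free (\matrix_(i < n) simple i)
    & forall b, b \in R -> exists c : 'I_n -> int,
        b = \sum_i (c i)%:~R *: simple i /\
        ((forall i, 0 <= c i) \/ (forall i, c i <= 0))].

Definition is_highest n (R : seq 'rV[rat]_n) (simple : 'I_n -> 'rV[rat]_n)
  (g : 'rV[rat]_n) : Prop :=
  g \in R /\ forall b, b \in R -> exists c : 'I_n -> nat,
    g - b = \sum_i (c i)%:R *: simple i.

(* X^ = X (+) Z, realised inside V x Q;  delta = (0,-1) *)
Definition hat n := ('rV[rat]_n * rat)%type.
Definition delta n : hat n := (0, -1).

(* affine reflection s_{a,m} acting (contragrediently) on X^:
   s_{a,m}(lam,k) = (lam - <lam,a^v> a, k - m <lam,a^v>)
                  = (lam,k) - <lam,a^v> (a + m delta).   *)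
Definition saff n (a av : 'rV[rat]_n) (m : rat) (x : hat n) : hat n :=
  (x.1 - pair x.1 av *: a, x.2 - m * pair x.1 av).

(* the simple affine reflections: Some i = s_{alpha_i,0}, None = s_{gamma,1} *)
Definition Shat n := option 'I_n.

Section Affine.
Variables (n : nat) (cor : 'rV[rat]_n -> 'rV[rat]_n)
  (simple : 'I_n -> 'rV[rat]_n) (g : 'rV[rat]_n) (T : idomainType).

Definition sact (s : Shat n) : hat n -> hat n :=
  match s with
  | Some i => saff (simple i) (cor (simple i)) 0
  | None => saff g (cor g) 1
  end.

Definition sroot (s : Shat n) : hat n :=
  match s with
  | Some i => (simple i, 0)
  | None => (- g + (delta n).1, (delta n).2)
  end.

(* coordinates of (lam,k) in X^ = X (+) Z w.r.t. the Z-basis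
   (delta-coordinate, fundamental weights): index 0 = Z-part k,
   index i+1 = <lam, alpha_i^v>.  *)
Definition hcoord (x : hat n) (j : 'I_n.+1) : rat :=
  if unlift ord0 j is Some i then pair x.1 (cor (simple i)) else x.2.

(* x (x) 1 in X^ (x) T = T^(n+1) *)
Definition tens1 (x : hat n) : 'rV[T]_n.+1 :=
  \row_j ((numq (hcoord x j))%:~R : T).

(* S_T = Sym(X^ (x) T) = T[x_0,...,x_n]; its grading puts the x_j in degree 2 *)
Definition ST := {mpoly T[n.+1]}.

Definition sym1 (x : hat n) : ST := \sum_j tens1 x 0 j *: 'X_j.

Definition homogST (d : nat) (p : ST) : bool :=
  if odd d then p == 0 else p \is (d./2).-homog.

(* (+)_{sigma in I(s)} S_T for s of length l; I(s) = subsets of {1..l},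
   realised as {set 'I_l} (index i : 'I_l stands for i+1) *)
Definition Mod (l : nat) := {ffun {set 'I_l} -> ST}.

Definition smul l (p : ST) (z : Mod l) : Mod l := [ffun σ => p * z σ].

(* ev(i_1 < ... < i_k) = s_{i_1} ... s_{i_k}, as a map on X^ *)
Definition ev (s : seq (Shat n)) l (σ : {set 'I_l}) : hat n -> hat n :=
  foldr (fun i : 'I_l => fun f => sact (nth None s (val i)) \o f) id [seq i <- enum 'I_l | i \in σ].

(* Delta(z)_gamma = Delta(z)_{gamma s_l} = z_gamma *)
Definition Delta l (z : Mod l) : Mod l.+1 :=
  [ffun σ : {set 'I_l.+1} => z [set i : 'I_l | widen_ord (leqnSn l) i \in σ]].

Definition cmul (s : seq (Shat n)) l (lam : hat n) (z : Mod l) : Mod l :=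
  [ffun σ => sym1 (ev s σ lam) * z σ].

(* XT s l z  <->  z lies in X_T((s_1,...,s_l)), where s_i = nth None s (i-1) *)
Fixpoint XT (s : seq (Shat n)) (l : nat) : Mod l -> Prop :=
  match l as l0 return Mod l0 -> Prop with
  | 0 => fun _ => True
  | l'.+1 => fun z => exists z1 z2 : Mod l',
      [/\ XT s z1, XT s z2 &
          z = Delta z1 + cmul s (sroot (nth None s l')) (Delta z2)]
  end.

End Affine.

From HB Require Import structures.
From mathcomp Require Import all_boot all_order all_algebra.
From mathcomp Require Import mpoly.
Import Order.TTheory GRing.Theory Num.Theory.
Local Open Scope ring_scope.
Set Implicit Arguments. Unset Strict Implicit.

(* A vector of the form Delta z takes the same value at sigma and at
   sigma + {l}, whereas ev(sigma + {l}) alpha_l = ev(sigma) (s_l alpha_l)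
   = - ev(sigma) alpha_l because s_l reflects its own simple affine root.
   Comparing these two components of Delta z1 + c^alpha_l (Delta z2) = 0 gives
   2 z1 = 0 and a z2 = 0, where a = ev(sigma) alpha_l (x) 1 is nonzero since
   ev(sigma) alpha_l is again an affine root.  So (z1, z2) |-> Delta z1 +
   c^alpha_l (Delta z2) is injective, and iterating it from the unit vector
   of S_T gives a homogeneous basis of X_T(s) indexed by bit strings of
   length l, the vector of a string with k ones having degree 2k. *)

Lemma pairNl n (x y : 'rV[rat]_n) : pair (- x) y = - pair x y.
Proof. by rewrite /pair -sumrN; apply: eq_bigr => i _; rewrite mxE mulNr. Qed.

Lemma saffN n (a av : 'rV[rat]_n) m (x : hat n) : saff a av m (- x) = - saff a av m x.
Proof. by rewrite /saff; congr (_, _) => /=; rewrite pairNl ?scaleNr ?mulrN opprD. Qed.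

Lemma foldr_comp_id (I A : Type) (F : I -> A -> A) (h : A -> A) (r : seq I) :
  foldr (fun i f => F i \o f) h r =1 foldr (fun i f => F i \o f) id r \o h.
Proof. by elim: r => //= i r IH x; congr (F i _); exact: IH. Qed.

Lemma mpoly_addrr_eq0 k (T : nzRingType) (p : {mpoly T[k]}) :
  (forall x : T, 2%:R * x = 0 -> x = 0) -> p + p = 0 -> p = 0.
Proof.
move=> two_reg pp0; apply/mpolyP => m; rewrite mcoeff0; apply: two_reg.
by rewrite mulr_natl mulr2n -mcoeffD pp0 mcoeff0.
Qed.

Lemma mcoeff_sumZX k (T : nzRingType) (v : 'rV[T]_k) j :
  (\sum_i v 0 i *: 'X_i : {mpoly T[k]})@_U_(j) = v 0 j.
Proof.
rewrite raddf_sum (bigD1 j) //= big1 ?addr0 => [|i /negbTE neq_ij].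
  by rewrite mcoeffZ mcoeffXU eqxx mulr1.
by rewrite mcoeffZ mcoeffXU neq_ij mulr0.
Qed.

Lemma sumZX_homog k (T : nzRingType) (v : 'rV[T]_k) :
  (\sum_i v 0 i *: 'X_i : {mpoly T[k]}) \is 1.-homog.
Proof.
apply: rpred_sum => j _; apply: rpredZ.
by rewrite (dhomogX T mdeg 1 U_(j)); apply/eqP/mdeg1.
Qed.

Fixpoint basis_index (l : nat) : finType :=
  match l with 0 => unit | l'.+1 => Finite.clone (basis_index l' * bool)%type _ end.

Fixpoint basis_deg (l : nat) : basis_index l -> nat :=
  match l return basis_index l -> nat with
  | 0 => fun _ => 0%N
  | l'.+1 => fun j => (basis_deg j.1 + j.2)%N
  end.

Lemma big_basis_indexS l (V : nmodType) (F : basis_index l.+1 -> V) :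
  \sum_j F j = \sum_(i : basis_index l) (F (i, true) + F (i, false)).
Proof.
transitivity (\sum_(i : basis_index l) \sum_(b : bool) F (i, b)).
  by rewrite pair_bigA; apply: eq_bigr => -[].
by apply: eq_bigr => i _; rewrite big_bool.
Qed.

Lemma big_unit (V : nmodType) (F : unit -> V) : \sum_(j : unit) F j = F tt.
Proof. by rewrite (big_pred1 tt) //; case. Qed.

Lemma card_basis_deg l k : #|[pred i : basis_index l | basis_deg i == k]| = 'C(l, k).
Proof.
rewrite -sum1_card big_mkcond /=.
elim: l k => [|l IH] k; first by rewrite big_unit bin0n eq_sym; case: k.
rewrite big_basis_indexS big_split /=; case: k => [|k].
  rewrite big1 ?add0n => [|i _]; last by rewrite inE addn1.
  have -> : 'C(l.+1, 0) = 'C(l, 0) by rewrite !bin0.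
  by rewrite -IH; apply: eq_bigr => i _; rewrite !inE addn0.
rewrite binS -!IH addnC.
by congr (_ + _)%N; apply: eq_bigr => i _; rewrite !inE ?addn1 ?addn0 ?eqSS.
Qed.

Section AffineFiltration.
Variables (n : nat) (R : seq 'rV[rat]_n) (cor : 'rV[rat]_n -> 'rV[rat]_n)
  (simple : 'I_n -> 'rV[rat]_n) (g : 'rV[rat]_n) (T : idomainType)
  (s : seq (Shat n)).

Definition affine_root (x : hat n) := x.1 \in R /\ exists m : int, x.2 = m%:~R.

Hypotheses (HR : is_root_system R cor) (Hb : is_base R simple)
  (Hg : is_highest R simple g).
Hypothesis two_reg : forall x : T, 2%:R * x = 0 -> x = 0.
Hypothesis tens1_affine_root : forall x, affine_root x -> tens1 cor simple T x != 0.

Local Notation sact := (sact cor simple g).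
Local Notation sroot := (sroot simple g).
Local Notation ev := (ev cor simple g s).
Local Notation sym1 := (sym1 cor simple T).
Local Notation cmul := (cmul cor simple g s).
Local Notation XT := (XT cor simple g s).
Local Notation Mod := (Mod n T).
Local Notation alpha l := (sroot (nth None s l)).

Lemma sactN o x : sact o (- x) = - sact o x.
Proof. by case: o => [i|]; rewrite /= saffN. Qed.

Lemma evN l (σ : {set 'I_l}) x : ev σ (- x) = - ev σ x.
Proof. by rewrite /ev; elim: [seq _ <- _ | _] => //= i r ->; rewrite sactN. Qed.

Lemma ev_setU1_max l (τ : {set 'I_l.+1}) x : ord_max \notin τ ->
  ev (ord_max |: τ) x = ev τ (sact (nth None s l) x).
Proof.
move=> maxNτ; rewrite /ev enum_ordSr !filter_rcons setU11 (negbTE maxNτ).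
rewrite foldr_rcons foldr_comp_id; congr (foldr _ _ _ _).
apply: eq_in_filter => _ /mapP [i _ ->]; rewrite !inE.
by rewrite -val_eqE /= ltn_eqF.
Qed.

Lemma sact_sroot o : sact o (sroot o) = - sroot o.
Proof.
case: HR => _ _ pair_cor _ _; case: Hb => simpleR _ _; case: Hg => gR _.
case: o => [i|] /=; rewrite /saff /delta /=; congr (_, _).
- by rewrite pair_cor // scaler_nat mulr2n opprD addrA subrr add0r.
- by rewrite mul0r subrr oppr0.
- by rewrite addr0 pairNl pair_cor // scaleNr !opprK scaler_nat mulr2n addrA addNr add0r.
- by rewrite addr0 pairNl pair_cor // mul1r !opprK.
Qed.

Lemma affine_root_sact o x : affine_root x -> affine_root (sact o x).
Proof.
case: HR => _ _ _ reflR pair_int; case: Hb => simpleR _ _; case: Hg => gR _.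
case=> xR [m xm]; case: o => [i|] /=; rewrite /saff /=; split.
- exact: reflR.
- by exists m; rewrite mul0r subr0.
- exact: reflR.
- exists (m - numq (pair x.1 (cor g))).
  by rewrite mul1r xm mulrzBr [in RHS]numqE pair_int // mulr1.
Qed.

Lemma affine_root_sroot o : affine_root (sroot o).
Proof.
case: HR => _ _ pair_cor reflR _; case: Hb => simpleR _ _; case: Hg => gR _.
case: o => [i|]; split; rewrite /= ?addr0;
  [exact: simpleR | by exists 0 | | by exists (-1)].
have := reflR _ _ gR gR.
by rewrite /refl pair_cor // scaler_nat mulr2n opprD addrA subrr add0r.
Qed.

Lemma affine_root_ev l (σ : {set 'I_l}) x : affine_root x -> affine_root (ev σ x).
Proof.
move=> rx; rewrite /ev.
by elim: [seq _ <- _ | _] => //= i r IH; apply: affine_root_sact.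
Qed.

Lemma sym1N x : sym1 (- x) = - sym1 x.
Proof.
rewrite /sym1 -sumrN; apply: eq_bigr => j _; rewrite -scaleNr !mxE /hcoord /=.
by case: (unlift ord0 j) => [i|]; rewrite ?pairNl numqN mulrNz.
Qed.

Lemma sym1_ev_alpha_neq0 k l (σ : {set 'I_l}) : sym1 (ev σ (alpha k)) != 0.
Proof.
have alpha_root := affine_root_ev σ (affine_root_sroot (nth None s k)).
apply: contraNneq (tens1_affine_root alpha_root) => sym1_0; apply/eqP/rowP => j.
have := congr1 (mcoeff U_(j)) sym1_0.
by rewrite mcoeff0 mcoeff_sumZX => ->; rewrite mxE.
Qed.

Local Notation widen := (widen_ord (leqnSn _)).

Lemma widen_inj l : injective (widen : 'I_l -> 'I_l.+1).
Proof. by move=> i j /(congr1 val) /= /val_inj. Qed.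

Lemma max_notin_widen l (τ : {set 'I_l}) : ord_max \notin widen @: τ.
Proof.
apply/negP => /imsetP [i _ /(congr1 val) /= max_i].
by move: (ltn_ord i); rewrite -max_i ltnn.
Qed.

Lemma Delta_widen l (z : Mod l) (τ : {set 'I_l}) : Delta z (widen @: τ) = z τ.
Proof.
rewrite ffunE; congr (z _); apply/setP => i.
by rewrite inE mem_imset //; apply: widen_inj.
Qed.

Lemma Delta_widen_max l (z : Mod l) (τ : {set 'I_l}) :
  Delta z (ord_max |: widen @: τ) = z τ.
Proof.
rewrite -(Delta_widen z τ) !ffunE; congr (z _); apply/setP => i.
by rewrite !inE -val_eqE /= ltn_eqF.
Qed.

Lemma Delta_add_cmulE l lam (z1 z2 : Mod l) σ :
  (Delta z1 + cmul lam (Delta z2)) σ = Delta z1 σ + sym1 (ev σ lam) * Delta z2 σ.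
Proof. by rewrite !ffunE. Qed.

Lemma Delta_add_cmul_eq0 l (z1 z2 : Mod l) :
  Delta z1 + cmul (alpha l) (Delta z2) = 0 -> z1 = 0 /\ z2 = 0.
Proof.
move=> E; suff z12_0 τ : z1 τ = 0 /\ z2 τ = 0.
  by split; apply/ffunP => τ; rewrite ffunE; case: (z12_0 τ).
pose a := sym1 (ev (widen @: τ) (alpha l)).
have E_τ : z1 τ + a * z2 τ = 0.
  have := congr1 (fun z : Mod l.+1 => z (widen @: τ)) E.
  by rewrite Delta_add_cmulE !Delta_widen ffunE.
have E_maxτ : z1 τ - a * z2 τ = 0.
  have := congr1 (fun z : Mod l.+1 => z (ord_max |: widen @: τ)) E.
  rewrite Delta_add_cmulE !Delta_widen_max ev_setU1_max ?max_notin_widen //.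
  by rewrite sact_sroot evN sym1N mulNr ffunE.
have z1_0 : z1 τ = 0.
  apply: mpoly_addrr_eq0 => //.
  by have := congr2 +%R E_τ E_maxτ; rewrite addr0 addrACA subrr addr0.
split=> //; move: E_τ; rewrite z1_0 add0r => /eqP.
by rewrite mulf_eq0 (negbTE (sym1_ev_alpha_neq0 _ _)) => /eqP.
Qed.

Lemma DeltaN l (z : Mod l) : Delta (- z) = - Delta z.
Proof. by apply/ffunP => σ; rewrite !ffunE. Qed.

Lemma cmulN l lam (z : Mod l) : cmul lam (- z) = - cmul lam z.
Proof. by apply/ffunP => σ; rewrite !ffunE mulrN. Qed.

Lemma Delta_cmul_direct l (z1 z2 : Mod l) :
  Delta z1 = cmul (alpha l) (Delta z2) -> Delta z1 = 0.
Proof.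
move=> E; have [-> _] : z1 = 0 /\ - z2 = 0.
  by apply: Delta_add_cmul_eq0; rewrite DeltaN cmulN -E subrr.
by apply/ffunP => σ; rewrite !ffunE.
Qed.

Lemma Delta_sum l (I : finType) (F : I -> Mod l) :
  Delta (\sum_i F i) = \sum_i Delta (F i).
Proof.
by apply/ffunP => σ; rewrite ffunE !sum_ffunE; apply: eq_bigr => i _; rewrite ffunE.
Qed.

Lemma cmul_sum l lam (I : finType) (F : I -> Mod l) :
  cmul lam (\sum_i F i) = \sum_i cmul lam (F i).
Proof.
apply/ffunP => σ; rewrite ffunE !sum_ffunE mulr_sumr.
by apply: eq_bigr => i _; rewrite ffunE.
Qed.

Lemma Delta_smul l p (z : Mod l) : Delta (smul p z) = smul p (Delta z).
Proof. by apply/ffunP => σ; rewrite !ffunE. Qed.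

Lemma cmul_smul l lam p (z : Mod l) : cmul lam (smul p z) = smul p (cmul lam z).
Proof. by apply/ffunP => σ; rewrite !ffunE mulrCA. Qed.

Fixpoint basis l : basis_index l -> Mod l :=
  match l return basis_index l -> Mod l with
  | 0 => fun _ => [ffun _ => 1]
  | l'.+1 => fun j =>
      if j.2 then cmul (alpha l') (Delta (basis j.1)) else Delta (basis j.1)
  end.

Lemma sum_basisS l (p : basis_index l.+1 -> ST n T) :
  \sum_j smul (p j) (basis j) =
  Delta (\sum_i smul (p (i, false)) (basis i)) +
  cmul (alpha l) (Delta (\sum_i smul (p (i, true)) (basis i))).
Proof.
rewrite big_basis_indexS big_split /= addrC !Delta_sum cmul_sum.
by congr (_ + _); apply: eq_bigr => i _; rewrite Delta_smul ?cmul_smul.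
Qed.

Lemma sum_basis0 (p : basis_index 0 -> ST n T) (σ : {set 'I_0}) :
  (\sum_j smul (p j) (basis j)) σ = p tt.
Proof. by rewrite big_unit !ffunE mulr1. Qed.

Lemma XT_span l (x : Mod l) :
  XT x <-> exists p : basis_index l -> ST n T, x = \sum_j smul (p j) (basis j).
Proof.
elim: l x => [|l IH] x.
  split=> // _; exists (fun _ => x set0); apply/ffunP => σ.
  by rewrite sum_basis0; congr (x _); apply/setP => -[].
split=> [[z1 [z2 [/IH [p1 ->] /IH [p2 ->] ->]]] | [p ->]].
  by exists (fun j => if j.2 then p2 j.1 else p1 j.1); rewrite sum_basisS.
rewrite sum_basisS; do 2 eexists; split; last by [].
  by apply/IH; eexists.
by apply/IH; eexists.
Qed.

Lemma XT_basis l (j : basis_index l) : XT (basis j).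
Proof.
apply/XT_span; exists (fun i => (i == j)%:R).
rewrite (bigD1 j) //= big1 ?addr0 => [|i /negbTE ->].
  by apply/ffunP => σ; rewrite ffunE eqxx mul1r.
by apply/ffunP => σ; rewrite !ffunE mul0r.
Qed.

Lemma basis_free l (p : basis_index l -> ST n T) :
  \sum_j smul (p j) (basis j) = 0 -> forall j, p j = 0.
Proof.
elim: l p => [|l IH] p.
  by move=> /(congr1 (fun z : Mod 0 => z set0)); rewrite sum_basis0 ffunE => ? [].
rewrite sum_basisS => /Delta_add_cmul_eq0 [/IH p_false /IH p_true] [i []]; exact.
Qed.

Lemma basis_homog l (j : basis_index l) σ : basis j σ \is (basis_deg j).-homog.
Proof.
elim: l j σ => [|l IH] j σ; first by rewrite ffunE dhomog1.
case: j => i [] /=; rewrite !ffunE ?addn0 ?addn1; last exact: IH.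
exact: dhomogM (sumZX_homog _) (IH _ _).
Qed.

End AffineFiltration.

Theorem lemma6p2 (n : nat) (R : seq 'rV[rat]_n) (cor : 'rV[rat]_n -> 'rV[rat]_n)
  (simple : 'I_n -> 'rV[rat]_n) (g : 'rV[rat]_n) (T : idomainType) :
  is_root_system R cor -> reduced R -> irreducible R ->
  is_base R simple -> is_highest R simple g ->
  (forall x : T, 2%:R * x = 0 -> x = 0) ->
  (forall (a : 'rV[rat]_n) (m : int), a \in R ->
     tens1 cor simple T (a + m%:~R *: (delta n).1, m%:~R * (delta n).2) != 0) ->
  forall s : seq (option 'I_n),
  (forall l', size s = l'.+1 ->
     (forall x : Mod n T l'.+1,
        XT cor simple g s x <->
        exists z1 z2, [/\ XT cor simple g s z1, XT cor simple g s z2 &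
          x = Delta z1 + cmul cor simple g s (sroot simple g (nth None s l')) (Delta z2)])
     /\
     (forall x : Mod n T l'.+1,
        (exists z1, XT cor simple g s (l := l') z1 /\ x = Delta z1) ->
        (exists z2, XT cor simple g s (l := l') z2 /\
           x = cmul cor simple g s (sroot simple g (nth None s l')) (Delta z2)) ->
        x = 0))
  /\
  (exists (I : finType) (deg : I -> nat) (b : I -> Mod n T (size s)),
     [/\ forall k, #|[pred i | deg i == k]| = 'C(size s, k),
         forall i, XT cor simple g s (b i) /\ forall σ, homogST (2 * deg i) (b i σ),
         forall x : Mod n T (size s),
           XT cor simple g s x <-> exists p : I -> ST n T, x = \sum_i smul (p i) (b i)
       & forall p : I -> ST n T, \sum_i smul (p i) (b i) = 0 -> forall i, p i = 0]).
Proof.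
move=> HR _ _ Hb Hg two_reg tens1_neq0 s.
have tens1_affine_root x : affine_root R x -> tens1 cor simple T x != 0.
  case: x => a k [/= aR [m ->]]; have := tens1_neq0 a (- m) aR.
  by rewrite /delta /= scaler0 addr0 mulrN1 mulrNz opprK.
split.
  move=> l _; split=> [x | x [z1 [_ ->]] [z2 [_ E]]]; first by split.
  exact: (Delta_cmul_direct HR Hb Hg two_reg tens1_affine_root E).
exists (basis_index (size s)), (@basis_deg _), (basis cor simple g T s (l := size s)).
split=> [k | j | x | p].
- exact: card_basis_deg.
- split=> [|σ]; first exact: XT_basis.
  by rewrite /homogST mul2n odd_double doubleK basis_homog.
- exact: XT_span.
- exact: (basis_free HR Hb Hg two_reg tens1_affine_root).
Qed.
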